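(* Let $G$ be a finite Frobenius group with abelian Frobenius kernel $N$ and abelian Frobenius complement $H$. Then $$A_G(t)=\frac{1}{|G|}\left[\frac{1}{1-|G|t}+\frac{|N|-1}{1-|N|t}+\frac{|N|(|H|-1)}{1-|H|t}\right]$$ and $$B_G(t)=\frac{1}{1-t}\left[1+\frac{(|N|-1)t}{|H|(1-|N|t)}+\frac{(|H|-1)t}{1-|H|t}\right].$$
   Context: A finite group $G$ is a Frobenius group if it has a proper non-trivial subgroup $H$ (a Frobenius complement) such that $H\cap gHg^{-1}=\{1\}$ for all $g\in G\setminus H$; the Frobenius kernel is $N=\left(G\setminus\bigcup_{g\in G}gHg^{-1}\right)\cup\{1\}$, a normal subgroup with $G=N\rtimes H$. For a finite group $G$ and $n\ge0$, $G$ acts on $G^n$ by simultaneous conjugation; let $G^{(n)}\subseteq G^n$ be the set of $n$-tuples of pairwise commuting elements. Let $\alpha_{G,n}$ (resp. $\beta_{G,n}$) be the number of orbits on $G^n$ (resp. $G^{(n)}$), and $A_G(t)=\sum_{n\ge0}\alpha_{G,n}t^n$, $B_G(t)=\sum_{n\ge0}\beta_{G,n}t^n$. *)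

From mathcomp Require Import all_boot all_order all_algebra all_fingroup all_solvable.
Set Implicit Arguments. Unset Strict Implicit. Unset Printing Implicit Defensive.
Import GRing.Theory.

(* Formal power series over rat, represented by their coefficient sequence. *)
Definition fps := nat -> rat.

Definition fps_add (f g : fps) : fps := fun n => (f n + g n)%R.
Definition fps_scale (c : rat) (f : fps) : fps := fun n => (c * f n)%R.
Definition fps_mul (f g : fps) : fps :=
  fun n => (\sum_(i < n.+1) f i * g (n - i)%N)%R.
Definition fps_one : fps := fun n => if n is 0 then 1%R else 0%R.
Definition fps_t : fps := fun n => if n is 1 then 1%R else 0%R.
(* fps_inv_1m a = 1/(1 - a t), the formal inverse of 1 - a t, i.e. sum_n a^n t^n *)
Definition fps_inv_1m (a : rat) : fps := fun n => (a ^+ n)%R.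
Definition fps_1m (a : rat) : fps := fps_add fps_one (fps_scale (- a)%R fps_t).

Lemma fps_inv_1mP (a : rat) n :
  fps_mul (fps_1m a) (fps_inv_1m a) n = fps_one n.
Proof.
rewrite /fps_mul /fps_1m /fps_add /fps_scale /fps_one /fps_t /fps_inv_1m.
case: n => [|n]; first by rewrite big_ord1 /= mulr0 addr0 mul1r.
rewrite big_ord_recl /= subn0 !big_ord_recl /= subSS subn0.
rewrite big1 ?addr0; last by move=> i _; rewrite /= mulr0 addr0 mul0r.
by rewrite mulr0 addr0 mul1r add0r mulr1 exprS mulNr addrN.
Qed.

Local Open Scope group_scope.

Section Orbits.
Variable gT : finGroupType.

Definition tuples (G : {set gT}) (n : nat) : {set {ffun 'I_n -> gT}} :=
  [set x : {ffun 'I_n -> gT} | [forall i, x i \in G]].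

Definition ctuples (G : {set gT}) (n : nat) : {set {ffun 'I_n -> gT}} :=
  [set x in tuples G n | [forall i, forall j, x i * x j == x j * x i]].

Definition tconj n (x : {ffun 'I_n -> gT}) (g : gT) : {ffun 'I_n -> gT} :=
  [ffun i => x i ^ g].

Definition num_conj_orbits n (G : {set gT}) (S : {set {ffun 'I_n -> gT}}) : nat :=
  #|[set [set tconj x g | g in G] | x in S]|.

Definition alpha (G : {set gT}) n : nat := num_conj_orbits G (tuples G n).
Definition beta (G : {set gT}) n : nat := num_conj_orbits G (ctuples G n).

Definition A_G (G : {set gT}) : fps := fun n => ((alpha G n)%:R)%R.
Definition B_G (G : {set gT}) : fps := fun n => ((beta G n)%:R)%R.
End Orbits.

From mathcomp Require Import all_boot all_order all_algebra all_fingroup all_solvable.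
From mathcomp Require Import ring.
From Stdlib Require Import FunctionalExtensionality.
Import GRing.Theory.

(* By Burnside's lemma, |G| alpha_n = sum_(a in G) |C_G(a)|^n and
   |G| beta_n = sum_(a in G) |C_G(a)^(n)|; splitting a commuting (n+1)-tuple
   into its first entry a and a commuting n-tuple of C_G(a) shows that the
   latter sum is |G^(n+1)|.  In a Frobenius group G = N ><| H the centralizer
   C_G(a) is G for a = 1, is N for a in N^#, and is a conjugate of H
   otherwise; when N and H are abelian every C^(n) is C^n, so both sums are
   explicit.  This gives alpha_n directly, and beta_(n+1) - beta_n as the
   coefficient of t^(n+1) in (1 - t) B_G(t). *)

Set Implicit Arguments. Unset Strict Implicit. Unset Printing Implicit Defensive.

Section TupleConjugation.
Local Open Scope group_scope.
Variables (gT : finGroupType) (n : nat).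
Implicit Types (A : {set gT}) (G : {group gT}) (x : {ffun 'I_n -> gT}).

Lemma tconj1 x : tconj x 1 = x.
Proof. by apply/ffunP=> i; rewrite ffunE conjg1. Qed.

Lemma tconjM x a b : tconj x (a * b) = tconj (tconj x a) b.
Proof. by apply/ffunP=> i; rewrite !ffunE conjgM. Qed.

Definition tconj_action := TotalAction tconj1 tconjM.

Lemma card_tuples A : #|tuples A n| = (#|A| ^ n)%N.
Proof.
rewrite -[in RHS](card_ord n) -card_ffun_on; apply: eq_card => x.
by rewrite inE; apply/forallP/ffun_onP.
Qed.

Lemma ctuples_abelian A : abelian A -> ctuples A n = tuples A n.
Proof.
move=> cAA; apply/setP=> x; rewrite inE andb_idr // inE => /forallP Ax.
by apply/forallP=> i; apply/forallP=> j; apply/eqP/(centsP cAA).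
Qed.

Lemma acts_tuples G : [acts G, on tuples G n | tconj_action].
Proof.
apply/subsetP=> a Ga; rewrite !inE; apply/subsetP=> x; rewrite !inE.
by move=> /forallP Gx; apply/forallP=> i; rewrite ffunE groupJ.
Qed.

Lemma acts_ctuples G : [acts G, on ctuples G n | tconj_action].
Proof.
apply/subsetP=> a Ga; rewrite !inE; apply/subsetP=> x; rewrite !inE.
case/andP=> /forallP Gx /forallP cxx; apply/andP; split.
  by apply/forallP=> i; rewrite ffunE groupJ.
apply/forallP=> i; apply/forallP=> j; rewrite !ffunE -!conjMg.
by have /forallP/(_ j)/eqP-> := cxx i.
Qed.

Lemma tconj_fixE x a : (tconj x a == x) = [forall i, x i \in 'C[a]].
Proof.
apply/eqP/forallP => [xa i | Cx].
  by apply/cent1P/commgP/conjg_fixP; rewrite -[in RHS]xa ffunE.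
by apply/ffunP=> i; rewrite ffunE; apply/conjg_fixP/commgP/cent1P.
Qed.

Lemma afix_tuples A a :
  'Fix_(tuples A n | tconj_action)[a] = tuples 'C_A[a] n.
Proof.
apply/setP=> x; rewrite !inE sub1set inE tconj_fixE.
apply/andP/forallP => [[/forallP Ax /forallP Cx] i | ACx].
  by rewrite inE Ax Cx.
by split; apply/forallP=> i; have /setIP[] := ACx i.
Qed.

Lemma afix_ctuples A a :
  'Fix_(ctuples A n | tconj_action)[a] = ctuples 'C_A[a] n.
Proof.
apply/setP=> x; rewrite [x \in ctuples 'C_A[a] n]inE -afix_tuples !inE.
by rewrite -!andbA; congr (_ && _); rewrite andbC.
Qed.

Lemma alpha_mul_card G : (alpha G n * #|G| = \sum_(a in G) #|'C_G[a]| ^ n)%N.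
Proof.
rewrite /alpha /num_conj_orbits -[[set _ | x in _]]/(orbit tconj_action G @: _).
rewrite -Frobenius_Cauchy ?acts_tuples //.
by apply: eq_bigr => a _; rewrite afix_tuples card_tuples.
Qed.

Lemma beta_mul_card_sum G :
  (beta G n * #|G| = \sum_(a in G) #|ctuples 'C_G[a] n|)%N.
Proof.
rewrite /beta /num_conj_orbits -[[set _ | x in _]]/(orbit tconj_action G @: _).
rewrite -Frobenius_Cauchy ?acts_ctuples //.
by apply: eq_bigr => a _; rewrite afix_ctuples.
Qed.

Definition tcons (a : gT) x : {ffun 'I_n.+1 -> gT} :=
  [ffun i => if unlift ord0 i is Some j then x j else a].

Lemma tcons0 a x : tcons a x ord0 = a.
Proof. by rewrite ffunE unlift_none. Qed.

Lemma tconsS a x j : tcons a x (lift ord0 j) = x j.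
Proof. by rewrite ffunE liftK. Qed.

Lemma tcons_inj a : injective (tcons a).
Proof. by move=> x y exy; apply/ffunP=> j; rewrite -(tconsS a) exy tconsS. Qed.

Lemma ctuplesS_first G a : a \in G ->
  [set y in ctuples G n.+1 | y ord0 == a] = tcons a @: ctuples 'C_G[a] n.
Proof.
move=> Ga; apply/setP=> y; rewrite !inE; apply/idP/imsetP.
  case/andP=> /andP[/forallP Gy /forallP cyy] /eqP ya.
  exists [ffun j => y (lift ord0 j)].
    rewrite !inE; apply/andP; split; apply/forallP=> i; rewrite ?ffunE.
      rewrite inE Gy; apply/cent1P; rewrite -ya.
      by have /forallP/(_ ord0)/eqP := cyy (lift ord0 i).
    by apply/forallP=> j; rewrite !ffunE; have /forallP := cyy (lift ord0 i).
  apply/ffunP=> i.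
  by case: (unliftP ord0 i) => [j ->|->]; rewrite ?tconsS ?tcons0 ?ffunE.
case=> x; rewrite !inE => /andP[/forallP GCx /forallP cxx] ->.
have [Gx cxa] : (forall j, x j \in G) /\ (forall j, commute (x j) a).
  by split=> j; have /setIP[? /cent1P] := GCx j.
rewrite tcons0 eqxx andbT; apply/andP; split; apply/forallP=> i.
  by case: (unliftP ord0 i) => [j ->|->]; rewrite ?tconsS ?tcons0.
apply/forallP=> j; apply/eqP.
case: (unliftP ord0 i) => [i' ->|->]; case: (unliftP ord0 j) => [j' ->|->];
  rewrite ?tconsS ?tcons0 //; first by have /forallP/(_ j')/eqP := cxx i'.
all: by rewrite cxa.
Qed.

Lemma card_ctuplesS G :
  #|ctuples G n.+1| = (\sum_(a in G) #|ctuples 'C_G[a] n|)%N.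
Proof.
rewrite -sum1_card.
rewrite (partition_big (fun y : {ffun 'I_n.+1 -> gT} => y ord0) (mem G)) /=.
  apply: eq_bigr => a Ga; rewrite -(card_imset _ (@tcons_inj a)) -ctuplesS_first //.
  by rewrite -sum1_card; apply: eq_bigl => y; rewrite [in RHS]inE.
by move=> y; rewrite !inE => /andP[/forallP + _]; apply.
Qed.

Lemma beta_mul_card G : (beta G n * #|G|)%N = #|ctuples G n.+1|.
Proof. by rewrite beta_mul_card_sum card_ctuplesS. Qed.

End TupleConjugation.

Lemma card_ctuples0 (gT : finGroupType) (A : {set gT}) : #|ctuples A 0| = 1%N.
Proof.
have -> : ctuples A 0 = tuples A 0.
  by apply/setP=> x; rewrite inE andb_idr // => _; apply/forallP=> -[].
by rewrite card_tuples.
Qed.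

Lemma beta0 (gT : finGroupType) (G : {group gT}) : beta G 0 = 1%N.
Proof.
apply/eqP; rewrite -(eqn_pmul2r (cardG_gt0 G)) mul1n beta_mul_card_sum.
by rewrite (eq_bigr (fun _ => 1%N)) ?sum1_card // => a _; rewrite card_ctuples0.
Qed.

Section FrobeniusCentralizers.
Local Open Scope group_scope.
Variables (gT : finGroupType) (G N H : {group gT}).
Hypothesis frobG : [Frobenius G = N ><| H].

Lemma Frobenius_subgroups : N \subset G /\ H \subset G.
Proof. by have [/sdprodW/mulG_sub] := Frobenius_context frobG. Qed.

Lemma Frobenius_cent1_abelian_ker : abelian N -> {in N^#, forall a, 'C_G[a] = N}.
Proof.
move=> cNN a N1a; have /setD1P[_ Na] := N1a.
apply/eqP; rewrite eqEsubset (Frobenius_cent1_ker frobG) // subsetI.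
by rewrite (proj1 Frobenius_subgroups) sub_cent1 (subsetP cNN).
Qed.

Lemma Frobenius_cent1_abelian_compl : abelian H -> {in H^#, forall a, 'C_G[a] = H}.
Proof.
move=> cHH a H1a; have /setD1P[_ Ha] := H1a.
have /andP[_ tiH] := FrobeniusWcompl frobG.
apply/eqP; rewrite eqEsubset (cent1_normedTI tiH) // subsetI.
by rewrite (proj2 Frobenius_subgroups) sub_cent1 (subsetP cHH).
Qed.

Lemma Frobenius_cent1_outside_ker a : abelian H -> a \in G :\: N ->
  exists2 y, y \in N & 'C_G[a] = H :^ y.
Proof.
move=> cHH /setDP[Ga N'a].
have /and3P[/eqP coverG _ _] := Frobenius_partition frobG.
rewrite -coverG in Ga; have /bigcupP[_ /setU1P[-> Na | /imsetP[y Ny ->] H1ay]] := Ga.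
  by rewrite Na in N'a.
exists y => //.
have Gy : y \in G by rewrite (subsetP (proj1 Frobenius_subgroups)).
rewrite -(conjgKV y a) cent1J -{1}(conjGid Gy) -conjIg.
by rewrite Frobenius_cent1_abelian_compl // -mem_conjg.
Qed.

Lemma sum_Frobenius_cent1 (F : {set gT} -> nat) :
  abelian N -> abelian H -> {in N, forall y, F (H :^ y) = F H} ->
  (\sum_(a in G) F 'C_G[a] = F G + (#|N| - 1) * F N + (#|G| - #|N|) * F H)%N.
Proof.
move=> cNN cHH FJ; have [sNG _] := Frobenius_subgroups.
rewrite (big_setID N) (setIidPr sNG) (big_setD1 1) //= cent11T setIT.
rewrite (eq_bigr (fun _ => F N)); last by move=> a /Frobenius_cent1_abelian_ker->.
rewrite [X in (_ + _ + X)%N](eq_bigr (fun _ => F H)); last first.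
  by move=> a /(Frobenius_cent1_outside_ker cHH)[y /FJ<- ->].
rewrite !sum_nat_const [#|G :\: N|]cardsD (setIidPr sNG).
by rewrite [#|N|](cardsD1 1) group1 add1n subn1.
Qed.

Lemma alpha_Frobenius n : abelian N -> abelian H ->
  (alpha G n * #|G| = #|G| ^ n + (#|N| - 1) * #|N| ^ n + (#|G| - #|N|) * #|H| ^ n)%N.
Proof.
move=> cNN cHH; rewrite alpha_mul_card.
rewrite (sum_Frobenius_cent1 (F := fun A => #|A| ^ n)%N) //.
by move=> y _; rewrite cardJg.
Qed.

Lemma card_ctuples_FrobeniusS n : abelian N -> abelian H ->
  (#|ctuples G n.+1| =
     #|ctuples G n| + (#|N| - 1) * #|N| ^ n + (#|G| - #|N|) * #|H| ^ n)%N.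
Proof.
move=> cNN cHH; rewrite card_ctuplesS.
rewrite (sum_Frobenius_cent1 (F := fun A => #|ctuples A n|)) //.
  by rewrite (ctuples_abelian _ cNN) (ctuples_abelian _ cHH) !card_tuples.
by move=> y _; rewrite !ctuples_abelian ?abelianJ // !card_tuples cardJg.
Qed.

Lemma beta_FrobeniusS n : abelian N -> abelian H ->
  (beta G n.+1 * #|G| =
     beta G n * #|G| + (#|N| - 1) * #|N| ^ n.+1 + (#|G| - #|N|) * #|H| ^ n.+1)%N.
Proof. by move=> cNN cHH; rewrite !beta_mul_card card_ctuples_FrobeniusS. Qed.

End FrobeniusCentralizers.

Section PowerSeries.
Local Open Scope ring_scope.

Lemma fps_mul_inv_1m1 (F : fps) n : fps_mul (fps_inv_1m 1) F n = \sum_(i < n.+1) F i.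
Proof.
rewrite /fps_mul (reindex_inj rev_ord_inj) /=; apply: eq_bigr => i _.
by rewrite /fps_inv_1m expr1n mul1r subSS subKn // -ltnS.
Qed.

Lemma fps_t_mul0 (F : fps) : fps_mul fps_t F 0 = 0.
Proof. by rewrite /fps_mul big_ord1 mul0r. Qed.

Lemma fps_t_mulS (F : fps) n : fps_mul fps_t F n.+1 = F n.
Proof.
rewrite /fps_mul !big_ord_recl big1 => [|i _]; last by rewrite mul0r.
by rewrite /= mul0r mul1r add0r addr0 /bump addn0 subn1.
Qed.

End PowerSeries.

Theorem corollary9p4 (gT : finGroupType) (G N H : {group gT}) :
  [Frobenius G = N ><| H]%g -> abelian N -> abelian H ->
  let g : rat := (#|G|%:R)%R in
  let k : rat := (#|N|%:R)%R in
  let h : rat := (#|H|%:R)%R in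
  A_G G =
    fps_scale g^-1
      (fps_add (fps_inv_1m g)
       (fps_add (fps_scale (k - 1) (fps_inv_1m k))
                (fps_scale (k * (h - 1)) (fps_inv_1m h))))
  /\
  B_G G =
    fps_mul (fps_inv_1m 1)
      (fps_add fps_one
       (fps_add (fps_scale ((k - 1) / h) (fps_mul fps_t (fps_inv_1m k)))
                (fps_scale (h - 1) (fps_mul fps_t (fps_inv_1m h))))).
Proof.
Local Open Scope ring_scope.
move=> frobG cNN cHH g k h.
have [defG _ _ _ _] := Frobenius_context frobG.
have cardG : #|G| = (#|N| * #|H|)%N := esym (sdprod_card defG).
have cardGN : (#|G| - #|N| = #|N| * (#|H| - 1))%N by rewrite cardG mulnBr muln1.
have k_neq0 : k != 0 by rewrite Num.Theory.pnatr_eq0 -lt0n cardG_gt0.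
have h_neq0 : h != 0 by rewrite Num.Theory.pnatr_eq0 -lt0n cardG_gt0.
have g_kh : g = k * h by rewrite /g cardG natrM.
have g_neq0 : g != 0 by rewrite g_kh mulf_neq0.
split; apply: functional_extensionality => n.
  have := congr1 (fun m => m%:R : rat) (alpha_Frobenius frobG n cNN cHH).
  rewrite cardGN !natrD !natrM !natrX !natrB ?cardG_gt0 // -/g -/k -/h => E.
  rewrite /A_G /fps_scale /fps_add /fps_inv_1m -[_%:R](mulfK g_neq0) E.
  by field.
rewrite /B_G fps_mul_inv_1m1; elim: n => [|n IHn].
  by rewrite beta0 big_ord1 /fps_add /fps_one /fps_scale !fps_t_mul0 !mulr0 !addr0.
rewrite big_ord_recr /= -IHn /fps_add /fps_one /fps_scale !fps_t_mulS /fps_inv_1m add0r.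
have := congr1 (fun m => m%:R : rat) (beta_FrobeniusS frobG n cNN cHH).
rewrite cardGN !natrD !natrM !natrX !natrB ?cardG_gt0 // -/g -/k -/h => E.
apply: (mulIf g_neq0); rewrite E g_kh !exprS.
by field.
Qed.
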